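(* Let $G$ be a graph containing a subgraph $F$ isomorphic to $F_4$, with vertices labelled $u_0,u_1,u_2,u_3$ as described in the context and $U=\{u_1,u_2,u_3\}$, and let $T$ be a triangle of $G$ vertex-disjoint from $F$. If $e(U,V(T))\geq 7$, then $G[V(T)\cup V(F)]$ contains a triangle and a quadrilateral that are vertex-disjoint.
   Context: All graphs are finite, simple and undirected. $F_4$ denotes the graph with $4$ vertices and $4$ edges not containing a $4$-cycle, i.e. a claw (star $K_{1,3}$) with one additional edge joining two of its leaves. In a copy of $F_4$, $u_0$ denotes its unique vertex of degree $3$ in $F_4$, $u_1,u_2$ its two vertices of degree $2$ in $F_4$, and $u_3$ its unique vertex of degree $1$ in $F_4$ (so $F_4$ has edges $u_0u_1,u_0u_2,u_1u_2,u_0u_3$). For disjoint vertex sets $L,M$, $e(L,M)$ is the number of edges of $G$ between $L$ and $M$. $G[W]$ is the subgraph induced by $W$. *)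

(* A simple graph on a finite vertex type T is a symmetric,
   irreflexive boolean relation e : rel T. *)
From mathcomp Require Import all_boot.
Set Implicit Arguments. Unset Strict Implicit. Unset Printing Implicit Defensive.

Section GraphDefs.
Variable T : finType.
Variable e : rel T.

Definition is_triangle (a b c : T) : bool :=
  [&& uniq [:: a; b; c], e a b, e b c & e a c].

Definition is_quadrilateral (a b c d : T) : bool :=
  [&& uniq [:: a; b; c; d], e a b, e b c, e c d & e d a].

Definition edges_between (L M : {set T}) : nat :=
  #|[set p in setX L M | e p.1 p.2]|.
End GraphDefs.

(** If the leaf u3 of F has two neighbours on T, then u0u1u2 is a triangle and
    u3 together with T spans a quadrilateral.  Otherwise u3 sends at most one
    edge to T, and e(U, V(T)) >= 7 forces u3 to have exactly one neighbour t on
    T and u1, u2 to be complete to T: then u1 spans a triangle with the other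
    two vertices of T, and u0 u3 t u2 is a quadrilateral. *)
From mathcomp Require Import all_boot zify.

Set Implicit Arguments.
Unset Strict Implicit.
Unset Printing Implicit Defensive.

Lemma bool3_sum_le (b1 b2 b3 : bool) : b1 + b2 + b3 <= 3.
Proof. by case: b1; case: b2; case: b3. Qed.

Lemma bool3_sum_ge3 (b1 b2 b3 : bool) : 3 <= b1 + b2 + b3 -> [&& b1, b2 & b3].
Proof. by case: b1; case: b2; case: b3. Qed.

Section TriangleQuadrilateral.
Variables (T : finType) (e : rel T).

Lemma edges_between_le_count (L M : {set T}) (s : seq (T * T)) :
  {subset setX L M <= s} -> edges_between e L M <= count (fun p => e p.1 p.2) s.
Proof.
move=> LMs; rewrite -size_filter; apply: leq_trans (card_size _).
apply/subset_leq_card/subsetP => p; rewrite in_set mem_filter => /andP[pLM ->].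
exact: LMs.
Qed.

Lemma edges_between3_le (a b c x y z : T) :
  edges_between e [set a; b; c] [set x; y; z] <=
  (e a x + e a y + e a z) + (e b x + e b y + e b z) + (e c x + e c y + e c z).
Proof.
set s := [seq (u, v) | u <- [:: a; b; c], v <- [:: x; y; z]].
apply: (@leq_trans (count (fun p => e p.1 p.2) s)); last by rewrite /= addn0 !addnA.
apply: edges_between_le_count => -[u v].
by rewrite in_setX => /andP[uL vM]; apply: allpairs_f; rewrite !inE in uL vM *; rewrite orbA.
Qed.

Lemma edges_between3_gt6 (a b c x y z : T) :
  6 < edges_between e [set a; b; c] [set x; y; z] -> e c x + e c y + e c z <= 1 ->
  [/\ e c x + e c y + e c z = 1, [&& e a x, e a y & e a z] & [&& e b x, e b y & e b z]].
Proof.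
move=> /leq_trans/(_ (edges_between3_le a b c x y z)).
have := @bool3_sum_ge3 (e a x) (e a y) (e a z).
have := @bool3_sum_ge3 (e b x) (e b y) (e b z).
have := bool3_sum_le (e a x) (e a y) (e a z).
have := bool3_sum_le (e b x) (e b y) (e b z).
move: (e a x + _ + _) (e b x + _ + _) (e c x + _ + _) => da db dc db3 da3 fullb fulla big dc1.
by split; [lia | apply: fulla; lia | apply: fullb; lia].
Qed.

Lemma disjoint_triangle_quadrilateral (S : {set T}) (V : seq T) (a b c x y z w : T) :
  uniq V -> size V = 7 -> {subset V <= S} -> {subset V <= [:: a; b; c; x; y; z; w]} ->
  e a b -> e b c -> e a c -> e x y -> e y z -> e z w -> e w x ->
  exists a b c x y z w : T,
    [/\ {subset [:: a; b; c; x; y; z; w] <= S},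
        is_triangle e a b c,
        is_quadrilateral e x y z w &
        [disjoint [set a; b; c] & [set x; y; z; w]]].
Proof.
move=> uV sizeV VS Vl eab ebc eac exy eyz ezw ewx.
have [_ eqVl] := uniq_min_size uV Vl ltac:(by rewrite sizeV).
have : uniq ([:: a; b; c] ++ [:: x; y; z; w]).
  by apply: leq_size_uniq uV Vl _; rewrite sizeV.
rewrite cat_uniq => /and3P[uabc nabc uxyzw].
exists a, b, c, x, y, z, w; split.
- by move=> v; rewrite -eqVl => /VS.
- by rewrite /is_triangle uabc eab ebc eac.
- by rewrite /is_quadrilateral uxyzw exy eyz ezw ewx.
- apply/pred0P => v /=; apply/negbTE/andP => -[vabc vxyzw].
  rewrite !inE -!orbA in vabc vxyzw.
  by case/hasP: nabc; exists v; rewrite !inE.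
Qed.

End TriangleQuadrilateral.

Theorem lemma9 (T : finType) (e : rel T)
    (e_sym : symmetric e) (e_irr : irreflexive e)
    (u0 u1 u2 u3 t1 t2 t3 : T) :
  (* F : a copy of F_4 with edges u0u1, u0u2, u1u2, u0u3 *)
  uniq [:: u0; u1; u2; u3] ->
  e u0 u1 -> e u0 u2 -> e u1 u2 -> e u0 u3 ->
  (* T : a triangle of G vertex-disjoint from F *)
  is_triangle e t1 t2 t3 ->
  [disjoint [set t1; t2; t3] & [set u0; u1; u2; u3]] ->
  7 <= edges_between e [set u1; u2; u3] [set t1; t2; t3] ->
  exists a b c x y z w : T,
    [/\ {subset [:: a; b; c; x; y; z; w] <= [set t1; t2; t3; u0; u1; u2; u3]},
        is_triangle e a b c,
        is_quadrilateral e x y z w &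
        [disjoint [set a; b; c] & [set x; y; z; w]]].
Proof.
move=> uF e01 e02 e12 e03 /and4P[uT e12t e23t e13t] dTF big.
have uV : uniq [:: t1; t2; t3; u0; u1; u2; u3].
  rewrite -[[:: t1, _, _ & _]]/([:: t1; t2; t3] ++ [:: u0; u1; u2; u3]) cat_uniq uT uF andbT.
  apply/hasPn => v vF; apply/negP => vT; rewrite !inE in vT vF.
  by have := disjointFr dTF (x := v); rewrite !inE -!orbA vF => /(_ vT).
have VS : {subset [:: t1; t2; t3; u0; u1; u2; u3] <= [set t1; t2; t3; u0; u1; u2; u3]}.
  by move=> v; rewrite !inE -!orbA.
have tq := disjoint_triangle_quadrilateral (e := e) uV erefl VS.
have leaf_le1 := edges_between3_gt6 big.
case h1: (e u3 t1); case h2: (e u3 t2); case h3: (e u3 t3);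
  [ apply: (tq u0 u1 u2 u3 t1 t2 t3)
  | apply: (tq u0 u1 u2 u3 t1 t3 t2)
  | apply: (tq u0 u1 u2 u3 t1 t2 t3)
  | have [_ /and3P[_ u1t2 u1t3] /and3P[u2t1 _ _]] := leaf_le1 ltac:(by rewrite h1 h2 h3);
    apply: (tq u1 t2 t3 u0 u3 t1 u2)
  | apply: (tq u0 u1 u2 u3 t2 t1 t3)
  | have [_ /and3P[u1t1 _ u1t3] /and3P[_ u2t2 _]] := leaf_le1 ltac:(by rewrite h1 h2 h3);
    apply: (tq u1 t1 t3 u0 u3 t2 u2)
  | have [_ /and3P[u1t1 u1t2 _] /and3P[_ _ u2t3]] := leaf_le1 ltac:(by rewrite h1 h2 h3);
    apply: (tq u1 t1 t2 u0 u3 t3 u2)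
  | by have [] := leaf_le1 ltac:(by rewrite h1 h2 h3); rewrite h1 h2 h3 ];
  by rewrite // 1?e_sym //; apply/allP; rewrite /= !inE !eqxx ?orbT.
Qed.
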